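(* Let $\gamma\in\mathbb{R}\setminus\{0,1\}$, $\epsilon\in\mathbb{R}$, and set $\nu=\frac{\gamma-2}{\gamma-1}$, assumed not to be an integer. Let $\mathfrak g$ be a real Lie algebra and let $L\in\mathfrak g$ and $a_k,b_k\in\mathfrak g$ ($k=0,1,2,\dots$) satisfy: (a) $k\,\frac{\gamma-1}{\gamma}\,b_k+[a_{k-1},L]=0$ for all $k\ge1$; (b) the identity \[ \frac{\gamma-1}{\gamma}\sum_{k\ge1}k\,a_k\,z^{k-1+\nu}=\epsilon L+\sum_{k\ge0}[L,b_k]\,z^{k}, \] understood as an identity of formal sums of real powers of $z$ with $\mathfrak g$-valued coefficients (coefficients of each exponent compared separately); (c) $\sum_{k=1}^{N}[a_{k-1},b_{N-k}]=0$ for all $N\ge1$. Then \[ [a_0,b_0]=[a_0,b_1]=[L,b_1]=0,\qquad [b_0,b_1]=\epsilon b_1,\qquad [b_0,L]=\epsilon L,\qquad [a_0,L]=\frac{1}{\nu-2}\,b_1 . \] In particular, for $\epsilon\neq0$ these are the relations of the Lie algebra $\mathcal L$, and for $\epsilon=0$ they reduce to $[a_0,b_0]=[a_0,b_1]=[L,b_1]=[b_0,b_1]=[b_0,L]=0$, $[a_0,L]=\frac{1}{\nu-2}b_1$ (the Lie algebra $\mathcal L'$).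
   Context: These conditions arise from the prolongation equations $\frac{\gamma-1}{\gamma}P_z+[M,L]=0$, $\frac{\gamma-1}{\gamma}z^{\frac{\gamma-2}{\gamma-1}}M_z=\epsilon L+[L,P]$, $[M,P]=0$ for the equation $u_{tt}+\epsilon u_t=[(1+u/\gamma)^{\gamma-1}]_{xx}$, with $z=(1+u/\gamma)^{\gamma-1}$ and the ansatz $M=\sum_{k\ge0}a_k z^k$, $P=\sum_{k\ge0}b_k z^k$, where $L,a_k,b_k$ are (e.g.) vector fields in the pseudopotential variables. *)

From HB Require Import structures.
From mathcomp Require Import all_boot all_order all_algebra.
From mathcomp Require Import boolp reals.
Set Implicit Arguments. Unset Strict Implicit. Unset Printing Implicit Defensive.
Import Order.TTheory GRing.Theory Num.Theory.
Local Open Scope ring_scope.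

Definition is_lie_bracket (R : pzRingType) (V : lmodType R) (br : V -> V -> V) : Prop :=
  [/\ (forall (c : R) (x y z : V), br (c *: x + y) z = c *: br x z + br y z),
      (forall (c : R) (x y z : V), br z (c *: x + y) = c *: br z x + br z y),
      (forall x : V, br x x = 0) &
      (forall x y z : V, br x (br y z) + br y (br z x) + br z (br x y) = 0)].

(* Formal sums of real powers: a formal sum  sum_k c_k z^(k + s)  (k : nat)
   is represented by its coefficient function exponent |-> coefficient
   (R -> V). Since k |-> k + s is injective, the coefficient at exponent e
   is c_k if e = k + s for some (unique) k, and 0 otherwise. *)
Definition fseries (R : realType) (V : lmodType R) (c : nat -> V) (s : R) : R -> V :=
  fun e => match pselect (exists k : nat, k%:R + s = e) with
           | left H => c (projT1 (cid H))
           | right _ => 0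
           end.

Definition fconst (R : realType) (V : lmodType R) (v : V) : R -> V :=
  fun e => if e == 0 then v else 0.

(* Since nu is not an integer, the exponents k + nu on the left of (b) never
   meet the integer exponents on the right, so (b) splits into
   eps L + [L, b_0] = 0, [L, b_1] = 0 and a_1 = 0.  Conditions (c) at N = 1, 2
   and (a) at k = 1 then give [a_0, b_0], [a_0, b_1] and [a_0, L] in terms of
   b_1, and the Jacobi identity carries the eigenvalue eps of ad b_0 from L to
   [a_0, L], hence to b_1. *)
From HB Require Import structures.
From mathcomp Require Import all_boot all_order all_algebra.
From mathcomp Require Import boolp reals.
From mathcomp Require Import ring.
Set Implicit Arguments. Unset Strict Implicit. Unset Printing Implicit Defensive.
Import Order.TTheory GRing.Theory Num.Theory.
Local Open Scope ring_scope.

Lemma natrD_neq_natr (R : pzRingType) (x : R) (k m : nat) :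
  (forall n : int, x != n%:~R) -> k%:R + x != m%:R.
Proof.
move=> x_nonint; apply/eqP => xE; have /eqP[] := x_nonint (m%:Z - k%:Z).
by rewrite intrB -!pmulrn -xE addrC addKr.
Qed.

Lemma fseries_natrD (R : realType) (V : lmodType R) (c : nat -> V) (s : R) k :
  fseries c s (k%:R + s) = c k.
Proof.
rewrite /fseries; case: pselect => [ex|]; last by case; exists k.
by case: (cid ex) => k' /= /addIr/eqP; rewrite eqr_nat => /eqP->.
Qed.

Lemma fseries_eq0 (R : realType) (V : lmodType R) (c : nat -> V) (s e : R) :
  (forall k : nat, k%:R + s != e) -> fseries c s e = 0.
Proof.
move=> off_lattice; rewrite /fseries; case: pselect => [[k kE]|//].
by move: (off_lattice k); rewrite kE eqxx.
Qed.

Section LieBracket.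
Variables (R : pzRingType) (V : lmodType R) (br : V -> V -> V).
Hypothesis lieV : is_lie_bracket br.

Lemma lie_brDl x y z : br (x + y) z = br x z + br y z.
Proof. by case: lieV => linl _ _ _; rewrite -[x]scale1r linl !scale1r. Qed.

Lemma lie_brDr x y z : br x (y + z) = br x y + br x z.
Proof. by case: lieV => _ linr _ _; rewrite -[y]scale1r linr !scale1r. Qed.

Lemma lie_br0l y : br 0 y = 0.
Proof. by apply: (addrI (br 0 y)); rewrite -lie_brDl !addr0. Qed.

Lemma lie_br0r x : br x 0 = 0.
Proof. by apply: (addrI (br x 0)); rewrite -lie_brDr !addr0. Qed.

Lemma lie_brZr c x y : br x (c *: y) = c *: br x y.
Proof. by case: lieV => _ linr _ _; rewrite -[c *: y]addr0 linr lie_br0r addr0. Qed.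

Lemma lie_brNr x y : br x (- y) = - br x y.
Proof. by rewrite -scaleN1r lie_brZr scaleN1r. Qed.

Lemma lie_brC x y : br x y = - br y x.
Proof.
case: lieV => _ _ alt _; apply/eqP; rewrite -addr_eq0.
by have := alt (x + y); rewrite lie_brDl !lie_brDr !alt add0r addr0 => ->.
Qed.

Lemma lie_br_leibniz x y z : br x (br y z) = br (br x y) z + br y (br x z).
Proof.
case: lieV => _ _ _ jacobi; apply/eqP; rewrite (lie_brC (br x y)) (lie_brC x z).
by rewrite lie_brNr -opprD addrC -addr_eq0 addrA jacobi.
Qed.

End LieBracket.

Section ProlongationRelations.
Variables (R : realType) (V : lmodType R) (br : V -> V -> V).
Variables (gamma eps nu : R) (L : V) (a b : nat -> V).
Hypothesis lieV : is_lie_bracket br.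
Hypotheses (gamma_neq0 : gamma != 0) (gamma_neq1 : gamma != 1).
Hypothesis nuE : nu = (gamma - 2) / (gamma - 1).
Hypothesis nu_nonint : forall n : int, nu != n%:~R.
Hypothesis eq_a : forall k : nat, (0 < k)%N ->
  (k%:R * ((gamma - 1) / gamma)) *: b k + br (a k.-1) L = 0.
Hypothesis eq_b : forall e : R,
  fseries (fun k : nat => ((gamma - 1) / gamma * k.+1%:R) *: a k.+1) nu e
  = fconst (eps *: L) e + fseries (fun k : nat => br L (b k)) 0 e.
Hypothesis eq_c : forall N : nat, (0 < N)%N ->
  \sum_(1 <= k < N.+1) br (a k.-1) (b (N - k)%N) = 0.

Let coef_neq0 : (gamma - 1) / gamma != 0.
Proof. by rewrite mulf_neq0 ?invr_eq0 ?subr_eq0. Qed.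

Let nu_neq_natr (k : nat) : nu != k%:R := nu_nonint k.

Let lhs_eq0_at_natr (m : nat) :
  fseries (fun k : nat => ((gamma - 1) / gamma * k.+1%:R) *: a k.+1) nu
    (m%:R + 0) = 0.
Proof. by apply: fseries_eq0 => k; rewrite addr0 natrD_neq_natr. Qed.

Lemma prolong_br_b0_L : br (b 0%N) L = eps *: L.
Proof.
have := eq_b (0%:R + 0).
rewrite lhs_eq0_at_natr fseries_natrD addr0 /fconst eqxx.
by move/eqP; rewrite eq_sym addr_eq0 (lie_brC lieV) opprK => /eqP->.
Qed.

Lemma prolong_br_L_b1 : br L (b 1%N) = 0.
Proof.
have := eq_b (1%:R + 0); rewrite lhs_eq0_at_natr fseries_natrD addr0 /fconst.
by rewrite oner_eq0 add0r.
Qed.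

Lemma prolong_a1_eq0 : a 1%N = 0.
Proof.
have := eq_b (0%:R + nu).
rewrite fseries_natrD add0r /fconst (negbTE (nu_neq_natr 0)) add0r.
rewrite fseries_eq0 => [|k]; last by rewrite addr0 eq_sym nu_neq_natr.
by rewrite mulr1 => /eqP; rewrite scaler_eq0 (negbTE coef_neq0) => /eqP.
Qed.

Lemma prolong_br_a0_b0 : br (a 0%N) (b 0%N) = 0.
Proof. by have := @eq_c 1 isT; rewrite big_nat1. Qed.

Lemma prolong_br_a0_b1 : br (a 0%N) (b 1%N) = 0.
Proof.
have := @eq_c 2 isT; rewrite big_nat_recr // big_nat1 /=.
by rewrite prolong_a1_eq0 (lie_br0l lieV) addr0.
Qed.

Lemma prolong_br_a0_L : br (a 0%N) L = - ((gamma - 1) / gamma) *: b 1%N.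
Proof. by have /eqP := @eq_a 1 isT; rewrite mul1r addrC addr_eq0 scaleNr => /eqP. Qed.

Lemma prolong_br_b0_b1 : br (b 0%N) (b 1%N) = eps *: b 1%N.
Proof.
have ad_b0_a0L : br (b 0%N) (br (a 0%N) L) = eps *: br (a 0%N) L.
  rewrite (lie_br_leibniz lieV) (lie_brC lieV (b 0%N)) prolong_br_a0_b0 oppr0.
  by rewrite (lie_br0l lieV) add0r prolong_br_b0_L (lie_brZr lieV).
move: ad_b0_a0L; rewrite prolong_br_a0_L (lie_brZr lieV).
rewrite [RHS]scalerA (mulrC eps) -scalerA.
by apply: scalerI; rewrite oppr_eq0.
Qed.

Lemma prolong_br_a0_L_nu : br (a 0%N) L = (nu - 2)^-1 *: b 1%N.
Proof.
rewrite nuE; have gamma1_neq0 : gamma - 1 != 0 by rewrite subr_eq0.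
have -> : (gamma - 2) / (gamma - 1) - 2 = - (gamma / (gamma - 1)) by field.
by rewrite prolong_br_a0_L invrN invf_div.
Qed.

End ProlongationRelations.

Theorem proposition4 (R : realType) (V : lmodType R) (br : V -> V -> V)
  (gamma eps nu : R) (L : V) (a b : nat -> V) :
  is_lie_bracket br ->
  gamma != 0 -> gamma != 1 ->
  nu = (gamma - 2) / (gamma - 1) ->
  (forall n : int, nu != n%:~R) ->
  (* (a) *)
  (forall k : nat, (0 < k)%N ->
     (k%:R * ((gamma - 1) / gamma)) *: b k + br (a k.-1) L = 0) ->
  (* (b): (g-1)/g sum_{k>=1} k a_k z^(k-1+nu) = eps L + sum_{k>=0} [L,b_k] z^k,
     reindexed k -> k+1 on the left, compared coefficientwise *)
  (forall e : R,
     fseries (fun k : nat => ((gamma - 1) / gamma * k.+1%:R) *: a k.+1) nu e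
     = fconst (eps *: L) e + fseries (fun k : nat => br L (b k)) 0 e) ->
  (* (c) *)
  (forall N : nat, (0 < N)%N ->
     \sum_(1 <= k < N.+1) br (a k.-1) (b (N - k)%N) = 0) ->
  [/\ br (a 0%N) (b 0%N) = 0, br (a 0%N) (b 1%N) = 0, br L (b 1%N) = 0,
      br (b 0%N) (b 1%N) = eps *: b 1%N &
      br (b 0%N) L = eps *: L] /\
  br (a 0%N) L = (nu - 2)^-1 *: b 1%N.
Proof.
move=> lieV gamma_neq0 gamma_neq1 nuE nu_nonint eq_a eq_b eq_c.
split; last exact: (prolong_br_a0_L_nu (br := br) gamma_neq1 nuE eq_a).
split.
- exact: (prolong_br_a0_b0 (br := br) eq_c).
- exact: prolong_br_a0_b1 lieV gamma_neq0 gamma_neq1 nu_nonint eq_b eq_c.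
- exact: (prolong_br_L_b1 (br := br) nu_nonint eq_b).
- exact: prolong_br_b0_b1 lieV gamma_neq0 gamma_neq1 nu_nonint eq_a eq_b eq_c.
- exact: prolong_br_b0_L lieV nu_nonint eq_b.
Qed.
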